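(* Let $G$ be a threshold graph with binary string $b=0^{s_1}1^{t_1}\cdots0^{s_k}1^{t_k}$ (all $s_i,t_i\geq1$), and for each $i\in\{1,\ldots,k\}$ let $\sigma_i=\sum_{j=1}^i s_j$ and $\tau_i=\sum_{j=i}^k t_j$. Then \[ \max_{1\leq i\leq k}\left\{\frac{(\tau_i-1)+\sqrt{(\tau_i-1)^2+4\tau_i\sigma_i}}{2}\right\}\leq\lambda_{\max}(G) \] and \[ \lambda_{\min}(G)\leq\min_{1\leq i\leq k}\left\{\frac{(\tau_i-1)-\sqrt{(\tau_i-1)^2+4\tau_i\sigma_i}}{2}\right\}. \]
   Context: $\lambda_{\max}(G)$ and $\lambda_{\min}(G)$ denote the largest and smallest eigenvalues of the $(0,1)$-adjacency matrix of $G$. Threshold graphs from binary strings: given $b=b_1\cdots b_n\in\{0,1\}^n$ with $b_1=0$, start with a single vertex and for $j=2,\ldots,n$ add a new vertex adjacent to all previous vertices if $b_j=1$ and isolated if $b_j=0$; the result is $G(b)$, and $b$ is its binary string. $0^s$ (resp. $1^t$) denotes $s$ consecutive zeros (resp. $t$ consecutive ones). *)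

From HB Require Import structures.
From mathcomp Require Import all_boot all_order all_algebra.
From mathcomp Require Import reals.
Set Implicit Arguments. Unset Strict Implicit. Unset Printing Implicit Defensive.
Import Order.TTheory GRing.Theory Num.Theory.
Local Open Scope ring_scope.

(* Binary string 0^{s_1}1^{t_1}...0^{s_k}1^{t_k}; false = 0, true = 1.
   s and t are the (0-indexed) lists (s_1,...,s_k), (t_1,...,t_k). *)
Definition thr_string (s t : seq nat) : seq bool :=
  flatten [seq nseq p.1 false ++ nseq p.2 true | p <- zip s t].

(* Threshold graph G(b): vertices 0..n-1 (vertex j is the (j+1)-th added);
   for i < j, i ~ j iff b_j = 1 (vertex j is dominating when added).
   Its (0,1)-adjacency matrix over a real field R. *)
Definition thr_adj (R : realType) (b : seq bool) : 'M[R]_(size b) :=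
  \matrix_(i, j) (if i != j then (nth false b (maxn i j))%:R else 0).

Definition is_lambda_max (R : realType) n (A : 'M[R]_n) (lam : R) : Prop :=
  eigenvalue A lam /\ (forall mu, eigenvalue A mu -> mu <= lam).
Definition is_lambda_min (R : realType) n (A : 'M[R]_n) (lam : R) : Prop :=
  eigenvalue A lam /\ (forall mu, eigenvalue A mu -> lam <= mu).

(* sigma_i and tau_i for 0-indexed i (i.e. paper's index i+1) *)
Definition thr_sigma (s : seq nat) (i : nat) : nat := \sum_(j < i.+1) nth 0%N s j.
Definition thr_tau (t : seq nat) (i : nat) : nat := \sum_(i <= j < size t) nth 0%N t j.

From HB Require Import structures.
From mathcomp Require Import all_boot all_order all_algebra.
From mathcomp Require Import reals complex zify ring.

(* Cut b between its i-th block of zeros and its i-th block of ones; let Z be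
   the sigma_i zeros before the cut and O the tau_i ones after it.  A zero is
   adjacent exactly to the later ones and a one to every earlier vertex, so Z is
   independent, O is a clique and Z, O are completely joined.  The vector equal
   to tau_i on Z, theta on O and 0 elsewhere therefore satisfies (x A)_q =
   theta x_q on Z and O whenever theta is an eigenvalue of the quotient matrix
   [[0, tau_i], [sigma_i, tau_i - 1]], i.e. theta^2 = (tau_i - 1) theta +
   tau_i sigma_i.  Its Rayleigh quotient is then theta, and the Rayleigh bounds
   of a real symmetric matrix (from the spectral theorem over R[i]) place the
   two roots theta between lambda_min and lambda_max. *)

Set Implicit Arguments.
Unset Strict Implicit.
Unset Printing Implicit Defensive.
Import Order.TTheory GRing.Theory Num.Theory.
Local Open Scope ring_scope.
Local Open Scope sesquilinear_scope.

Section UnitaryDiagonalization.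
Variables (C : numClosedFieldType) (n : nat) (P : 'M[C]_n) (d : 'rV[C]_n).
Hypothesis P_unitary : P \is unitarymx.

Local Notation A := (P^t* *m diag_mx d *m P).

Lemma unitary_diag_eigenvalue i : eigenvalue A (d 0 i).
Proof.
have PPt : P *m P^t* = 1%:M := unitarymxP P_unitary.
apply/eigenvalueP; exists (row i P).
  by rewrite !mulmxA -row_mul PPt row1 -rowE row_diag_mx -scalemxAl -rowE.
apply: contra_neq (oner_neq0 C) => Pi0.
have := congr1 (fun v => (v *m P^t*) 0 i) Pi0.
by rewrite /= -row_mul PPt mul0mx !mxE eqxx.
Qed.

Lemma unitary_diag_qform (u : 'rV_n) :
  (u *m A *m u^t*) 0 0 = \sum_j d 0 j * `|(u *m P^t*) 0 j| ^+ 2.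
Proof.
rewrite !mulmxA -[_ *m P *m _]mulmxA -[P *m u^t*]trmxCK trmx_mul map_mxM trmxCK.
rewrite mul_mx_diag mxE; apply: eq_bigr => j _.
by rewrite !mxE normCK mulrCA mulrA.
Qed.

Lemma unitary_dotmx (u : 'rV_n) : (u *m u^t*) 0 0 = \sum_j `|(u *m P^t*) 0 j| ^+ 2.
Proof.
have PtP : P^t* *m P = 1%:M.
  by rewrite -[X in _ *m X]trmxCK; apply/unitarymxP; rewrite trmxC_unitary.
have -> : u *m u^t* = (u *m P^t*) *m (u *m P^t*)^t*.
  by rewrite trmx_mul map_mxM trmxCK mulmxA -(mulmxA u) PtP mulmx1.
by rewrite mxE; apply: eq_bigr => j _; rewrite !mxE normCK.
Qed.

Lemma unitary_diag_qform_le (m : C) (u : 'rV_n) : (forall j, d 0 j <= m) ->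
  (u *m A *m u^t*) 0 0 <= m * (u *m u^t*) 0 0.
Proof.
move=> d_le_m; rewrite unitary_diag_qform unitary_dotmx mulr_sumr.
by apply: ler_sum => j _; rewrite ler_wpM2r ?exprn_ge0.
Qed.

End UnitaryDiagonalization.

Section RealSymmetric.
Variable R : rcfType.

Local Notation toC := (real_complex R).

Lemma map_real_complex_conj m p (M : 'M[R]_(m, p)) :
  map_mx Num.conj (map_mx toC M) = map_mx toC M.
Proof. by apply/matrixP => i j; rewrite !mxE conj_Creal // complex_real. Qed.

Variables (n : nat) (A : 'M[R]_n).
Hypotheses (n_gt0 : (0 < n)%N) (A_sym : A^T = A).
Local Notation Ac := (map_mx toC A).

Lemma symmetric_rayleigh_max : exists2 l, eigenvalue A l &
  forall v : 'rV_n, (v *m A *m v^T) 0 0 <= l * (v *m v^T) 0 0.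
Proof.
have Ac_herm : Ac \is hermsymmx.
  apply: realsym_hermsym.
    by apply/is_hermitianmxP; rewrite expr0 scale1r map_trmx A_sym map_mx_id.
  by apply/mxOverP => i j; rewrite mxE complex_real.
set P := spectralmx Ac; set d := spectral_diag Ac.
have P_unitary : P \is unitarymx := spectral_unitarymx Ac.
have AcE : Ac = P^t* *m diag_mx d *m P.
  by rewrite -invmx_unitary //; apply/orthomx_spectralP/hermitian_normalmx.
pose g j := complex.Re (d 0 j).
have dE j : d 0 j = toC (g j).
  by rewrite RRe_real // (mxOverP (hermitian_spectral_diag_real Ac_herm)).
pose j0 := [arg max_(j > Ordinal n_gt0) g j]%O.
have g_le j : g j <= g j0 by rewrite /j0; case: arg_maxP => // i _; apply.
exists (g j0).
  rewrite -(eigenvalue_map toC) AcE.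
  by have := unitary_diag_eigenvalue d P_unitary j0; rewrite dE.
move=> v; pose vc := map_mx toC v.
have qformE (M : 'M_n) : toC ((v *m M *m v^T) 0 0) = (vc *m map_mx toC M *m vc^t*) 0 0.
  by rewrite map_trmx map_real_complex_conj -!map_mxM [RHS]mxE.
have normE := qformE 1%:M; rewrite map_mx1 !mulmx1 in normE.
rewrite -lecR rmorphM /= normE qformE AcE.
by apply: unitary_diag_qform_le P_unitary _ _ _ => j; rewrite dE lecR.
Qed.

End RealSymmetric.

Lemma eigenvalue_opp (F : fieldType) n (A : 'M[F]_n) a :
  eigenvalue (- A) a = eigenvalue A (- a).
Proof.
apply/eigenvalueP/eigenvalueP => -[v vA v_neq0]; exists v => //.
  by rewrite scaleNr -vA mulmxN opprK.
by rewrite mulmxN vA scaleNr opprK.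
Qed.

Lemma mulmx_trmx_gt0 (R : realDomainType) n (v : 'rV[R]_n) :
  v != 0 -> 0 < (v *m v^T) 0 0.
Proof.
move=> v_neq0; have sq_ge0 j : 0 <= v 0 j * v^T j 0 by rewrite mxE -expr2 sqr_ge0.
rewrite mxE lt_def sumr_ge0 // andbT; apply: contra v_neq0 => /eqP sum0.
apply/eqP/rowP => j; have := psumr_eq0P (fun j _ => sq_ge0 j) sum0 (i := j) isT.
by rewrite !mxE -expr2 => /eqP; rewrite sqrf_eq0 => /eqP.
Qed.

Lemma rayleigh_le (R : realDomainType) n (A : 'M[R]_n) (l theta : R) (x : 'rV_n) :
  x != 0 ->
  (x *m A *m x^T) 0 0 = theta * (x *m x^T) 0 0 ->
  (x *m A *m x^T) 0 0 <= l * (x *m x^T) 0 0 -> theta <= l.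
Proof. by move=> /mulmx_trmx_gt0 x_gt0 ->; rewrite ler_pM2r. Qed.

Lemma rayleigh_ge (R : realDomainType) n (A : 'M[R]_n) (l theta : R) (x : 'rV_n) :
  x != 0 ->
  (x *m A *m x^T) 0 0 = theta * (x *m x^T) 0 0 ->
  l * (x *m x^T) 0 0 <= (x *m A *m x^T) 0 0 -> l <= theta.
Proof. by move=> /mulmx_trmx_gt0 x_gt0 ->; rewrite ler_pM2r. Qed.

Lemma symmetric_lambda_max (R : realType) n (A : 'M[R]_n) :
  (0 < n)%N -> A^T = A -> exists l, is_lambda_max A l /\
  forall v : 'rV_n, (v *m A *m v^T) 0 0 <= l * (v *m v^T) 0 0.
Proof.
move=> n_gt0 A_sym; have [l l_eig l_max] := symmetric_rayleigh_max n_gt0 A_sym.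
exists l; split=> //; split=> // mu /eigenvalueP[v vA v_neq0].
apply: (rayleigh_le v_neq0 _ (l_max v)).
by rewrite vA -scalemxAl mxE.
Qed.

Lemma symmetric_lambda_min (R : realType) n (A : 'M[R]_n) :
  (0 < n)%N -> A^T = A -> exists l, is_lambda_min A l /\
  forall v : 'rV_n, l * (v *m v^T) 0 0 <= (v *m A *m v^T) 0 0.
Proof.
move=> n_gt0 A_sym; have NA_sym : (- A)^T = - A by rewrite linearN /= A_sym.
have [l [[l_eig l_max] l_bound]] := symmetric_lambda_max n_gt0 NA_sym.
exists (- l); split; first split.
- by rewrite -eigenvalue_opp.
- by move=> mu mu_eig; rewrite lerNl l_max // eigenvalue_opp opprK.
- move=> v; rewrite mulNr lerNl; have := l_bound v.
  by rewrite mulmxN mulNmx [X in X <= _]mxE.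
Qed.

Lemma count_take_nth (T : Type) (x0 : T) (a : pred T) m s :
  count a (take m s) = (\sum_(p < size s) ((p < m) && a (nth x0 s p)))%N.
Proof.
elim: s m => [|x s IHs] [|m] /=; rewrite ?big_ord0 // big_ord_recl /=.
  by rewrite big1.
by rewrite IHs.
Qed.

Lemma count_drop_nth (T : Type) (x0 : T) (a : pred T) m s :
  count a (drop m s) = (\sum_(p < size s) ((m <= p) && a (nth x0 s p)))%N.
Proof.
elim: s m => [|x s IHs] [|m] /=; rewrite ?big_ord0 // big_ord_recl /=.
  by have := IHs 0%N; rewrite drop0 => ->.
by rewrite IHs.
Qed.

Lemma thr_string_cons x y s t :
  thr_string (x :: s) (y :: t) = nseq x false ++ nseq y true ++ thr_string s t.
Proof. by rewrite /thr_string /= catA. Qed.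

Lemma count_thr_string (a : pred bool) s t : size s = size t ->
  count a (thr_string s t) = (a false * sumn s + a true * sumn t)%N.
Proof.
elim: s t => [|x s IHs] [|y t] //=; first by rewrite !muln0.
move=> [/IHs count_st].
rewrite thr_string_cons !count_cat !count_nseq count_st; lia.
Qed.

Lemma thr_string_block s t i : size s = size t -> (i < size s)%N ->
  thr_string s t = (thr_string (take i s) (take i t) ++ nseq (nth 0 s i) false)
                   ++ (nseq (nth 0 t i) true ++ thr_string (drop i.+1 s) (drop i.+1 t)).
Proof.
elim: i s t => [|i IHi] [|x s] [|y t] //= [size_st] i_lt.
  by rewrite thr_string_cons !drop0.
by rewrite !thr_string_cons (IHi s t size_st i_lt) !catA.
Qed.

Lemma sum_nth_take m s : (\sum_(j < m) nth 0 s j)%N = sumn (take m s).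
Proof.
elim: m s => [|m IHm] [|x s]; rewrite ?big_ord0 ?take0 // big_ord_recl /=.
  by rewrite big1 // => j _; rewrite nth_nil.
by rewrite IHm.
Qed.

Lemma thr_sigmaE s i : (i < size s)%N ->
  thr_sigma s i = (sumn (take i s) + nth 0 s i)%N.
Proof. by move=> i_lt; rewrite /thr_sigma sum_nth_take (take_nth 0) // sumn_rcons. Qed.

Lemma thr_tauE t i : (i < size t)%N ->
  thr_tau t i = (nth 0 t i + sumn (drop i.+1 t))%N.
Proof.
move=> i_lt; rewrite /thr_tau -[X in \sum_(X <= _ < _) _]add0n big_addn.
rewrite -size_drop big_mkord.
under eq_bigr => j _ do rewrite addnC -nth_drop.
by rewrite sum_nth_take take_size (drop_nth 0).
Qed.

Lemma thr_string_cut s t i : size s = size t -> (i < size s)%N ->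
  exists P, count negb (take P (thr_string s t)) = thr_sigma s i /\
            count id (drop P (thr_string s t)) = thr_tau t i.
Proof.
move=> size_st i_lt; rewrite (thr_string_block size_st i_lt).
set head := _ ++ nseq _ false; exists (size head).
rewrite take_size_cat // drop_size_cat // !count_cat !count_nseq.
rewrite !count_thr_string ?size_take ?size_drop ?size_st //.
by rewrite thr_sigmaE ?thr_tauE -?size_st //= !mul0n !mul1n !add0n !addn0.
Qed.

Lemma thr_adj_sym (R : realType) b : (thr_adj R b)^T = thr_adj R b.
Proof. by apply/matrixP => p q; rewrite !mxE eq_sym maxnC. Qed.

Lemma thr_adjE (R : realType) b (p q : 'I_(size b)) :
  thr_adj R b p q = ((p < q)%N && nth false b q || (q < p)%N && nth false b p)%:R.
Proof.
rewrite mxE -(inj_eq val_inj) /=.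
by case: (ltngtP p q) => [p_lt_q|q_lt_p|->]; rewrite ?eqxx ?orbF.
Qed.

Section TestVector.
Variables (R : realType) (b : seq bool) (P : nat).

Local Notation sigma := (count negb (take P b)).
Local Notation tau := (count id (drop P b)).
Local Notation A := (thr_adj R b).

Definition zero_before p := (p < P)%N && ~~ nth false b p.
Definition one_from p := (P <= p)%N && nth false b p.

Definition test_vec (theta : R) : 'rV[R]_(size b) :=
  \row_p (tau%:R * (zero_before p)%:R + theta * (one_from p)%:R).

Variable theta : R.
Local Notation x := (test_vec theta).

Lemma test_vec_adj_zero_before (p q : 'I_(size b)) : zero_before q ->
  x 0 p * A p q = theta * (one_from p)%:R.
Proof.
rewrite thr_adjE mxE /zero_before /one_from => /andP[q_lt /negbTE bq].
case: (ltngtP p q) => [p_lt_q|q_lt_p|->] /=.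
- by rewrite bq (leqNgt P p) (ltn_trans p_lt_q q_lt) !mulr0.
- by case: (nth false b p); rewrite ?andbT ?andbF /= ?mulr0 ?mulr1 ?add0r ?addr0.
- by rewrite (leqNgt P q) q_lt !mulr0.
Qed.

Lemma test_vec_adj_one_from (p q : 'I_(size b)) : one_from q ->
  x 0 p * A p q = x 0 p - theta * (p == q)%:R.
Proof.
rewrite thr_adjE mxE -val_eqE /zero_before /one_from => /andP[P_le bq].
case: (ltngtP p q) => [p_lt_q|q_lt_p|p_eq_q] /=.
- by rewrite bq mulr1 mulr0 subr0.
- rewrite (ltnNge p P) (leq_trans P_le (ltnW q_lt_p)) /=.
  by case: (nth false b p); rewrite ?mulr0 ?mulr1 ?subr0 ?addr0.
- by rewrite p_eq_q bq (ltnNge q P) P_le /= !mulr0 !mulr1 add0r subrr.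
Qed.

Lemma sum_zero_before : \sum_(p < size b) ((zero_before p)%:R : R) = sigma%:R.
Proof. by rewrite (count_take_nth false) natr_sum. Qed.

Lemma sum_one_from : \sum_(p < size b) ((one_from p)%:R : R) = tau%:R.
Proof. by rewrite (count_drop_nth false) natr_sum. Qed.

Lemma test_vec_mul_adj_zero_before (q : 'I_(size b)) : zero_before q ->
  (x *m A) 0 q = theta * tau%:R.
Proof.
move=> zq; rewrite mxE.
under eq_bigr => p _ do rewrite test_vec_adj_zero_before //.
by rewrite -mulr_sumr sum_one_from.
Qed.

Lemma test_vec_mul_adj_one_from (q : 'I_(size b)) : one_from q ->
  (x *m A) 0 q = tau%:R * sigma%:R + theta * tau%:R - theta.
Proof.
move=> oq; rewrite mxE.
under eq_bigr => p _ do rewrite test_vec_adj_one_from //.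
have sum_eq1 : \sum_(p < size b) ((p == q)%:R : R) = 1.
  by rewrite (bigD1 q) //= eqxx big1 ?addr0 // => p /negbTE->.
rewrite sumrB -mulr_sumr sum_eq1 mulr1; congr (_ - _).
under eq_bigr => p _ do rewrite mxE.
by rewrite big_split -!mulr_sumr sum_zero_before sum_one_from.
Qed.

Lemma test_vec_neq0 : (0 < sigma)%N -> (0 < tau)%N -> x != 0.
Proof.
rewrite -has_count => /hasP[c /(nthP false)[p p_lt bp] /= c0] tau_gt0.
rewrite size_take_min ltn_min in p_lt; case/andP: p_lt => p_lt_P p_lt_b.
apply/negP => /eqP/rowP/(_ (Ordinal p_lt_b)).
rewrite !mxE /zero_before /one_from /= -(nth_take _ p_lt_P) bp c0 p_lt_P.
rewrite (leqNgt P p) p_lt_P mulr1 mulr0 addr0 => /eqP.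
by rewrite pnatr_eq0 eqn0Ngt tau_gt0.
Qed.

Hypothesis theta_root : theta ^+ 2 = (tau%:R - 1) * theta + tau%:R * sigma%:R.

Lemma test_vec_mul_adj q : x 0 q * (x *m A) 0 q = theta * x 0 q ^+ 2.
Proof.
have [zq|/negbTE zqF] := boolP (zero_before q).
  have oqF : one_from q = false.
    by move: zq => /andP[q_lt _]; rewrite /one_from (leqNgt P q) q_lt.
  rewrite test_vec_mul_adj_zero_before // mxE zq oqF mulr1 mulr0 addr0.
  by rewrite mulrCA expr2.
have [oq|/negbTE oqF] := boolP (one_from q).
  rewrite test_vec_mul_adj_one_from // mxE zqF oq mulr0 mulr1 add0r theta_root.
  by congr (_ * _); ring.
by rewrite mxE zqF oqF !mulr0 addr0 expr0n mulr0 mul0r.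
Qed.

Lemma test_vec_qform : (x *m A *m x^T) 0 0 = theta * (x *m x^T) 0 0.
Proof.
rewrite [LHS]mxE [in RHS]mxE mulr_sumr; apply: eq_bigr => q _.
by rewrite [x^T _ _]mxE mulrC test_vec_mul_adj expr2.
Qed.

End TestVector.

Lemma quadratic_half_root (F : numFieldType) (a c r : F) :
  r ^+ 2 = a ^+ 2 + 4 * c -> ((a + r) / 2) ^+ 2 = a * ((a + r) / 2) + c.
Proof.
move=> r2; apply/eqP; rewrite -subr_eq0; apply/eqP.
transitivity ((r ^+ 2 - (a ^+ 2 + 4 * c)) / 4); last by rewrite r2 subrr mul0r.
by field.
Qed.

Lemma thr_sigma_gt0 s i : all (fun x => 0 < x)%N s -> (i < size s)%N ->
  (0 < thr_sigma s i)%N.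
Proof. by move=> /allP s_pos i_lt; rewrite thr_sigmaE // ltn_addl // s_pos ?mem_nth. Qed.

Lemma thr_tau_gt0 t i : all (fun x => 0 < x)%N t -> (i < size t)%N ->
  (0 < thr_tau t i)%N.
Proof. by move=> /allP t_pos i_lt; rewrite thr_tauE // ltn_addr // t_pos ?mem_nth. Qed.

Lemma thr_adj_rayleigh_witness (R : realType) s t i (r : R) :
  size s = size t -> (i < size s)%N ->
  all (fun x => 0 < x)%N s -> all (fun x => 0 < x)%N t ->
  let sg := (thr_sigma s i)%:R : R in
  let tu := (thr_tau t i)%:R : R in
  r ^+ 2 = (tu - 1) ^+ 2 + 4 * tu * sg ->
  exists2 x : 'rV[R]_(size (thr_string s t)), x != 0 &
    (x *m thr_adj R (thr_string s t) *m x^T) 0 0 = ((tu - 1) + r) / 2 * (x *m x^T) 0 0.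
Proof.
move=> size_st i_lt s_pos t_pos sg tu r2.
have [P [sigmaP tauP]] := thr_string_cut size_st i_lt.
exists (test_vec (thr_string s t) P ((tu - 1 + r) / 2)).
  by apply: test_vec_neq0; rewrite ?sigmaP ?tauP ?thr_sigma_gt0 ?thr_tau_gt0 -?size_st.
apply: test_vec_qform; rewrite sigmaP tauP.
by apply: quadratic_half_root; rewrite r2 mulrA.
Qed.

Lemma rV_neq0_gt0 (R : nmodType) n (v : 'rV[R]_n) : v != 0 -> (0 < n)%N.
Proof. by case: n v => // v; rewrite thinmx0 eqxx. Qed.

Theorem theorem5p2 (R : realType) (k : nat) (s t : seq nat) :
  (0 < k)%N -> size s = k -> size t = k ->
  all (fun x => 0 < x)%N s -> all (fun x => 0 < x)%N t ->
  (exists lmax : R, is_lambda_max (thr_adj R (thr_string s t)) lmax /\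
     forall i, (i < k)%N ->
       let sg := (thr_sigma s i)%:R : R in
       let tu := (thr_tau t i)%:R : R in
       ((tu - 1) + Num.sqrt ((tu - 1) ^+ 2 + 4 * tu * sg)) / 2 <= lmax) /\
  (exists lmin : R, is_lambda_min (thr_adj R (thr_string s t)) lmin /\
     forall i, (i < k)%N ->
       let sg := (thr_sigma s i)%:R : R in
       let tu := (thr_tau t i)%:R : R in
       lmin <= ((tu - 1) - Num.sqrt ((tu - 1) ^+ 2 + 4 * tu * sg)) / 2).
Proof.
move=> k_gt0 size_s size_t s_pos t_pos; subst k.
have size_st : size s = size t by [].
pose D i : R := ((thr_tau t i)%:R - 1) ^+ 2 + 4 * (thr_tau t i)%:R * (thr_sigma s i)%:R.
have sqrtD i : Num.sqrt (D i) ^+ 2 = D i.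
  by rewrite sqr_sqrtr // addr_ge0 ?sqr_ge0 ?mulr_ge0 ?ler0n.
have witness i r i_lt := @thr_adj_rayleigh_witness R s t i r size_st i_lt s_pos t_pos.
have n_gt0 : (0 < size (thr_string s t))%N.
  by have [x /rV_neq0_gt0] := witness 0%N _ k_gt0 (sqrtD 0%N).
have [lmax [lmax_max lmax_ge]] := symmetric_lambda_max n_gt0 (thr_adj_sym R _).
have [lmin [lmin_min lmin_le]] := symmetric_lambda_min n_gt0 (thr_adj_sym R _).
split; [exists lmax | exists lmin]; split=> // i i_lt.
- have [x x_neq0 xE] := witness i _ i_lt (sqrtD i).
  exact: rayleigh_le x_neq0 xE (lmax_ge x).
- have [x x_neq0 xE] := witness i (- Num.sqrt (D i)) i_lt (etrans (sqrrN _) (sqrtD i)).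
  exact: rayleigh_ge x_neq0 xE (lmin_le x).
Qed.
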